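(* Let $\mathcal{P}$ be a collection of cells. Let $a=(i,j)$, $b=(k,l)$ with $i<k$, $j<l$, and $\beta=(p,q)$ with $p>k$, $q>l$, and suppose $[a,b]$ and $[\alpha,\beta]$ with $\alpha=(i,l)$ are inner intervals of $\mathcal{P}$ (so $\alpha$ is the upper left corner $c$ of $[a,b]$). Put $c=\alpha=(i,l)$, $d=(k,j)$, $\gamma=(i,q)$, $\delta=(p,l)$, $h=(k,q)$, $r=(p,j)$. Let $<^{\mathsf{P}}$ be a $\mathsf{P}$-order on $V(\mathcal{P})$ and suppose that the leading monomials of $f_{a,b}$ and $f_{\alpha,\beta}$ with respect to $<^{\mathsf{P}}_{\mathrm{lex}}$ are not coprime. Then $S(f_{a,b},f_{\alpha,\beta})$ reduces to $0$ modulo $\mathcal{G}$ with respect to $<^{\mathsf{P}}_{\mathrm{lex}}$ if and only if one of the following holds: (1) $x_dx_\delta x_\gamma<^{\mathsf{P}}_{\mathrm{lex}}x_\beta x_ax_b$, and ($h,\delta<^{\mathsf{P}}b$ or $h,\delta<^{\mathsf{P}}\beta$); (2) $x_dx_\delta x_\gamma<^{\mathsf{P}}_{\mathrm{lex}}x_\beta x_ax_b$, $[d,\delta]$ is an inner interval of $\mathcal{P}$, and ($r,\gamma<^{\mathsf{P}}a$ or $r,\gamma<^{\mathsf{P}}\beta$); (3) $x_\beta x_ax_b<^{\mathsf{P}}_{\mathrm{lex}}x_dx_\delta x_\gamma$, and ($h,a<^{\mathsf{P}}d$ or $h,a<^{\mathsf{P}}\gamma$); (4) $x_\beta x_ax_b<^{\mathsf{P}}_{\mathrm{lex}}x_dx_\delta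 x_\gamma$, $[d,\delta]$ is an inner interval of $\mathcal{P}$, and ($r,b<^{\mathsf{P}}d$ or $r,b<^{\mathsf{P}}\delta$).
   Context: For $a=(i,j), b=(k,l)\in\mathbb{Z}^2$ with $a\le b$ componentwise, the interval $[a,b]=\{(m,n)\in\mathbb{Z}^2: i\le m\le k,\ j\le n\le l\}$; it is proper if $i<k$ and $j<l$, in which case $a,b$ are its diagonal corners and $(i,l)$ (upper left), $(k,j)$ (lower right) its anti-diagonal corners. A cell is a proper interval $[v,v+(1,1)]$; its vertices are its four corners. A collection of cells $\mathcal{P}$ is a nonempty finite set of cells; $V(\mathcal{P})$ is the set of all vertices of its cells. A proper interval $[a,b]$ is an inner interval of $\mathcal{P}$ if every cell $[v,v+(1,1)]\subseteq[a,b]$ belongs to $\mathcal{P}$. Let $K$ be a field and $S=K[x_v: v\in V(\mathcal{P})]$. For an inner interval $[a,b]$ with upper left corner $c$ and lower right corner $d$, put $f_{a,b}=x_ax_b-x_cx_d$; $\mathcal{G}$ is the set of all such inner 2-minors of $\mathcal{P}$. A $\mathsf{P}$-order is a total order $<^{\mathsf{P}}$ on $V(\mathcal{P})$; $<^{\mathsf{P}}_{\mathrm{lex}}$ is the lexicographic monomial order on $S$ with $x_u<x_v\iff u<^{\mathsf{P}}v$. For vertices $u,v,w$, ''$u,v<^{\mathsf{P}}w$'' means $u<^{\mathsf{P}}w$ and $v<^{\mathsf{P}}w$. *)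

From HB Require Import structures.
From mathcomp Require Import all_boot all_order all_algebra.
From mathcomp Require Import mpoly.
Set Implicit Arguments. Unset Strict Implicit. Unset Printing Implicit Defensive.
Import Order.TTheory GRing.Theory Num.Theory.
Local Open Scope ring_scope.

Definition pt := (int * int)%type.

(* A collection of cells is given by the (nonempty, finite) list of the
   lower-left corners v of its cells [v, v+(1,1)]. *)
Definition cell_vertices (v : pt) : seq pt :=
  [:: v; (v.1 + 1, v.2); (v.1, v.2 + 1); (v.1 + 1, v.2 + 1)].

Definition vertices (P : seq pt) : seq pt :=
  undup (flatten [seq cell_vertices v | v <- P]).

Definition inner_interval (P : seq pt) (a b : pt) : Prop :=
  a.1 < b.1 /\ a.2 < b.2 /\
  forall v : pt, a.1 <= v.1 -> v.1 + 1 <= b.1 -> a.2 <= v.2 -> v.2 + 1 <= b.2 ->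
    v \in P.

(* A P-order on V(P) is encoded by the list [ord] of the vertices of P in
   increasing order (uniq ord, ord =i vertices P).  u <P w iff u comes
   before w in ord. *)
Definition is_Porder (P : seq pt) (ord : seq pt) : Prop :=
  uniq ord /\ ord =i vertices P.

Definition Plt (ord : seq pt) (u w : pt) : bool := (index u ord < index w ord)%N.

(* The variable x_v is the variable of index (index v ord) of
   S = K[x_0, ..., x_{n-1}], n = size ord. *)
Definition mvar (ord : seq pt) (v : pt) : 'X_{1..size ord} :=
  if insub (index v ord) is Some i then mnm1 i else mnm0.

Definition xv (K : fieldType) (ord : seq pt) (v : pt) : {mpoly K[size ord]} :=
  'X_[mvar ord v].

(* Lexicographic order induced by the P-order: x_u < x_v iff u <P v,
   i.e. the variable with larger index is larger. m1 < m2 iff at the largest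
   variable where the exponents differ, m1 has the smaller exponent. *)
Definition lexlt n (m1 m2 : 'X_{1..n}) : bool :=
  [exists i : 'I_n, (m1 i < m2 i)%N &&
     [forall j : 'I_n, (i < j)%N ==> (m1 j == m2 j)]].

Definition lexle n (m1 m2 : 'X_{1..n}) : bool := (m1 == m2) || lexlt m1 m2.

(* Leading monomial (w.r.t. lexlt) of a polynomial; mnm0 for p = 0. *)
Definition lmon (K : fieldType) n (p : {mpoly K[n]}) : 'X_{1..n} :=
  foldr (fun m acc => if lexlt acc m then m else acc)
        (head mnm0 (msupp p)) (msupp p).

Definition lcoef (K : fieldType) n (p : {mpoly K[n]}) : K := p@_(lmon p).

Definition mcoprime n (m1 m2 : 'X_{1..n}) : bool :=
  [forall i : 'I_n, (m1 i == 0%N) || (m2 i == 0%N)].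

Definition spoly (K : fieldType) n (f g : {mpoly K[n]}) : {mpoly K[n]} :=
  let L := mlcm (lmon f) (lmon g) in
  (lcoef f)^-1 *: ('X_[mnm_sub L (lmon f)] * f)
  - (lcoef g)^-1 *: ('X_[mnm_sub L (lmon g)] * g).

Definition fab (K : fieldType) (ord : seq pt) (a b : pt) : {mpoly K[size ord]} :=
  xv K ord a * xv K ord b - xv K ord (a.1, b.2) * xv K ord (b.1, a.2).

Definition inG (K : fieldType) (P ord : seq pt) (g : {mpoly K[size ord]}) : Prop :=
  exists a b, inner_interval P a b /\ g = fab K ord a b.

(* f reduces to 0 modulo G (w.r.t. lex): f has a standard expression
   f = sum_i u_i g_i with g_i in G and in(u_i g_i) <= in(f) whenever
   u_i g_i <> 0 (Herzog--Hibi). *)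
Definition reduces_to_zero (K : fieldType) (P ord : seq pt)
    (f : {mpoly K[size ord]}) : Prop :=
  exists s : seq ({mpoly K[size ord]} * {mpoly K[size ord]}),
    [/\ forall ug, ug \in s -> inG P ug.2,
        f = \sum_(ug <- s) ug.1 * ug.2 &
        forall ug, ug \in s -> ug.1 * ug.2 != 0 -> lexle (lmon (ug.1 * ug.2)) (lmon f)].

Definition mon3 (ord : seq pt) (u v w : pt) : 'X_{1..size ord} :=
  mnm_add (mnm_add (mvar ord u) (mvar ord v)) (mvar ord w).

(* The leading monomials in(f_{a,b}) and in(f_{c,beta}) can only share x_c, so the
   hypothesis forces in(f_{a,b}) = x_c x_d and in(f_{c,beta}) = x_c x_beta, and
   then S(f_{a,b}, f_{c,beta}) = x_d x_delta x_gamma - x_beta x_a x_b.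
   In a standard expression of this binomial the monomial x_beta x_a x_b is
   reached by a multiple mu f_{x,y} of an inner minor whose monomial x_x x_y
   divides it; the geometry leaves [x,y] = [a,b], [a,beta] or [b,beta], and the
   other term of mu f_{x,y} is x_beta x_c x_d (above in(S), impossible),
   x_b x_gamma x_r (then [d,delta] is inner) or x_a x_h x_delta.  Conversely
   x_a f_{b,beta} + x_delta f_{a,h} and x_b f_{a,beta} - x_gamma f_{d,delta} are
   standard expressions once their middle monomial lies below in(S).  Comparing
   the middle monomials with in(S) gives the four conditions. *)

From HB Require Import structures.
From mathcomp Require Import all_boot all_order all_algebra.
From mathcomp Require Import mpoly.
From mathcomp Require Import zify ring.
Set Implicit Arguments. Unset Strict Implicit. Unset Printing Implicit Defensive.
Import Order.TTheory GRing.Theory Num.Theory.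
Local Open Scope ring_scope.

Section LexOrder.
Variable n : nat.
Implicit Types m : 'X_{1..n}.

Lemma lexlt_addr m1 m2 m : lexlt (m1 + m)%MM (m2 + m)%MM = lexlt m1 m2.
Proof.
apply: eq_existsb => x; rewrite !mnmDE ltn_add2r; congr andb.
by apply: eq_forallb => y; rewrite !mnmDE eqn_add2r.
Qed.

Lemma lexlt_addl m1 m2 m : lexlt (m + m1)%MM (m + m2)%MM = lexlt m1 m2.
Proof. by rewrite ![(m + _)%MM]addmC lexlt_addr. Qed.

Lemma lexlt_irr m : lexlt m m = false.
Proof. by apply/existsP => -[x]; rewrite ltnn. Qed.

Lemma lexlt_trans m1 m2 m3 : lexlt m1 m2 -> lexlt m2 m3 -> lexlt m1 m3.
Proof.
move=> /existsP [x /andP [lx /forallP ex]] /existsP [y /andP [ly /forallP ey]].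
apply/existsP; case: (ltngtP x y) => [xy|yx|/val_inj xy].
- exists y; rewrite (eqP (implyP (ex y) xy)) ly /=.
  apply/forallP => z; apply/implyP => yz.
  by rewrite (eqP (implyP (ex z) (ltn_trans xy yz))) (implyP (ey z) yz).
- exists x; rewrite -(eqP (implyP (ey x) yx)) lx /=.
  apply/forallP => z; apply/implyP => xz.
  by rewrite (eqP (implyP (ex z) xz)) (implyP (ey z) (ltn_trans yx xz)).
- subst y; exists x; rewrite (ltn_trans lx ly) /=.
  apply/forallP => z; apply/implyP => xz.
  by rewrite (eqP (implyP (ex z) xz)) (implyP (ey z) xz).
Qed.

Lemma lexlt_asym m1 m2 : lexlt m1 m2 -> lexlt m2 m1 = false.
Proof.
move=> lt12; apply/negbTE/negP => lt21.
by have := lexlt_trans lt12 lt21; rewrite lexlt_irr.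
Qed.

Lemma lexlt_total m1 m2 : m1 != m2 -> lexlt m1 m2 || lexlt m2 m1.
Proof.
move=> ne; have [x0 hx0] : exists x, m1 x != m2 x.
  apply/existsP; apply: contraR ne; rewrite negb_exists => /forallP h.
  by apply/eqP/mnmP => x; apply/eqP; have := h x; rewrite negbK.
case: (@arg_maxnP _ x0 (fun x => m1 x != m2 x) val hx0) => x hx hmax.
have above (y : 'I_n) : (x < y)%N -> m1 y = m2 y.
  by move=> xy; apply/eqP; apply: contraTT xy => /hmax; rewrite -leqNgt.
case: (ltngtP (m1 x) (m2 x)) => [lt|gt|eq]; last by rewrite eq eqxx in hx.
- apply/orP; left; apply/existsP; exists x; rewrite lt /=.
  by apply/forallP => y; apply/implyP => /above ->.
- apply/orP; right; apply/existsP; exists x; rewrite gt /=.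
  by apply/forallP => y; apply/implyP => /above ->.
Qed.

Lemma lexleNgt m1 m2 : lexle m1 m2 = ~~ lexlt m2 m1.
Proof.
rewrite /lexle; case: (eqVneq m1 m2) => [->|ne] /=; first by rewrite lexlt_irr.
have /orP [lt12|lt21] := lexlt_total ne; first by rewrite lt12 lexlt_asym.
by rewrite lt21 (lexlt_asym lt21).
Qed.

Lemma lexle_refl m : lexle m m.
Proof. by rewrite /lexle eqxx. Qed.

Lemma lexltW m1 m2 : lexlt m1 m2 -> lexle m1 m2.
Proof. by rewrite /lexle => ->; rewrite orbT. Qed.

Lemma lexle_trans m1 m2 m3 : lexle m1 m2 -> lexle m2 m3 -> lexle m1 m3.
Proof.
rewrite /lexle => /orP [/eqP -> //|lt12] /orP [/eqP <-|lt23]; first by rewrite lt12 orbT.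
by rewrite (lexlt_trans lt12 lt23) orbT.
Qed.

Lemma lexle_lt_trans m1 m2 m3 : lexle m1 m2 -> lexlt m2 m3 -> lexlt m1 m3.
Proof. by rewrite /lexle => /orP [/eqP -> //|lt12]; apply: lexlt_trans. Qed.

Lemma lexle_anti m1 m2 : lexle m1 m2 -> lexle m2 m1 -> m1 = m2.
Proof.
rewrite /lexle => /orP [/eqP //|lt12] /orP [/eqP //|lt21].
by have := lexlt_trans lt12 lt21; rewrite lexlt_irr.
Qed.

Lemma lexle_addr m1 m2 m : lexle (m1 + m)%MM (m2 + m)%MM = lexle m1 m2.
Proof. by rewrite !lexleNgt lexlt_addr. Qed.

Lemma lexle_neq_lt m1 m2 : lexle m1 m2 -> m1 != m2 -> lexlt m1 m2.
Proof. by rewrite /lexle => /orP [/eqP ->|//]; rewrite eqxx. Qed.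

Lemma lexlt_mnm1D_lt (x y z w : 'I_n) : (maxn x y < maxn z w)%N ->
  lexlt (U_(x) + U_(y))%MM (U_(z) + U_(w))%MM.
Proof.
move=> lt.
have [t [tzw tmax]] : exists t : 'I_n, (t = z \/ t = w) /\ nat_of_ord t = maxn z w.
  by case: (leqP z w) => _; [exists w; split; [right|] | exists z; split; [left|]].
have neq (v s : 'I_n) : (v < s)%N -> (v == s) = false.
  by move=> vs; apply/negbTE; apply: contraTneq vs => ->; rewrite ltnn.
apply/existsP; exists t; rewrite !mnmDE !mnm1E (neq x) ?(neq y); try lia.
apply/andP; split; first by case: tzw => ->; rewrite eqxx ?addn1.
by apply/forallP => s; apply/implyP => ts; rewrite !mnmDE !mnm1E !neq //; lia.
Qed.

Lemma lexlt_mnm1D (x y z w : 'I_n) :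
  x != z -> x != w -> y != z -> y != w ->
  lexlt (U_(x) + U_(y))%MM (U_(z) + U_(w))%MM = (maxn x y < maxn z w)%N.
Proof.
move=> xz xw yz yw; apply/idP/idP; last exact: lexlt_mnm1D_lt.
apply: contraTT; rewrite -leqNgt => le.
have ne : maxn z w != maxn x y.
  by rewrite /maxn; do 2 case: ifP => _; rewrite val_eqE eq_sym.
by rewrite lexlt_asym // lexlt_mnm1D_lt // ltn_neqAle ne le.
Qed.

End LexOrder.

Section Monomials.
Variable n : nat.
Implicit Types m : 'X_{1..n}.

Lemma mcoprimeDl m1 m2 m :
  mcoprime (m1 + m2)%MM m = mcoprime m1 m && mcoprime m2 m.
Proof.
apply/forallP/andP => [cop|[/forallP cop1 /forallP cop2] s].
  split; apply/forallP => s; have := cop s.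
    by rewrite mnmDE addn_eq0; case: (m s == 0%N); rewrite ?orbT // !orbF => /andP [].
  by rewrite mnmDE addn_eq0; case: (m s == 0%N); rewrite ?orbT // !orbF => /andP [].
move: (cop1 s) (cop2 s); rewrite mnmDE addn_eq0.
by case: (m s == 0%N); rewrite ?orbT // !orbF => -> ->.
Qed.

Lemma mcoprimeC m1 m2 : mcoprime m1 m2 = mcoprime m2 m1.
Proof. by apply: eq_forallb => s; rewrite orbC. Qed.

Lemma addKm m1 m2 : (m1 + m2 - m1)%MM = m2.
Proof. by apply/mnmP => t; rewrite mnmBE mnmDE addKn. Qed.

Lemma addmAC m1 m2 m3 : (m1 + m2 + m3)%MM = (m1 + m3 + m2)%MM.
Proof. by rewrite -!addmA [(m2 + _)%MM]addmC. Qed.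

Lemma lem_addDl mu m1 m2 :
  (m1 <= mu + (m1 + m2))%MM /\ (m2 <= mu + (m1 + m2))%MM.
Proof. by split; apply: lepm_trans (lem_addl _ _); [apply: lem_addr | apply: lem_addl]. Qed.

Lemma mlcmDl m m1 m2 : mlcm (m + m1)%MM (m + m2)%MM = (m + mlcm m1 m2)%MM.
Proof. by apply/mnmP => t; rewrite !mnmE -addn_maxr. Qed.

Lemma mlcm_coprime m1 m2 : mcoprime m1 m2 -> mlcm m1 m2 = (m1 + m2)%MM.
Proof.
move=> /forallP cop; apply/mnmP => t; rewrite !mnmE.
by have /orP [/eqP ->|/eqP ->] := cop t; rewrite ?max0n ?maxn0 ?addn0.
Qed.

End Monomials.

Section LeadingMonomial.
Variables (K : fieldType) (n : nat).
Implicit Types (p u : {mpoly K[n]}) (m : 'X_{1..n}).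

Lemma foldr_lexmax (s : seq 'X_{1..n}) m0 :
  let r := foldr (fun m acc => if lexlt acc m then m else acc) m0 s in
  r \in m0 :: s /\ forall m, m \in m0 :: s -> lexle m r.
Proof.
elim: s => [|y s IH] /=.
  by split=> [|m]; rewrite ?inE ?eqxx // => /eqP ->; apply: lexle_refl.
set r := foldr _ _ _ in IH *; case: IH => rin rmax.
case: ifP => hlt; split.
- by rewrite !inE eqxx orbT.
- move=> m; rewrite !inE => /orP [/eqP ->|/orP [/eqP ->|ms]].
  + exact: lexle_trans (rmax _ (mem_head _ _)) (lexltW hlt).
  + exact: lexle_refl.
  + by apply: lexle_trans (lexltW hlt); apply: rmax; rewrite inE ms orbT.
- by move: rin; rewrite !inE => /orP [->|->]; rewrite ?orbT.
- move=> m; rewrite !inE => /orP [/eqP ->|/orP [/eqP ->|ms]].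
  + exact: rmax (mem_head _ _).
  + by rewrite lexleNgt hlt.
  + by apply: rmax; rewrite inE ms orbT.
Qed.

Lemma lmon_max p : p != 0 ->
  lmon p \in msupp p /\ forall m, m \in msupp p -> lexle m (lmon p).
Proof.
rewrite -msupp_eq0 /lmon; case: (msupp p) => [//|y s] _ /=.
have [] := foldr_lexmax (y :: s) y; rewrite /= [_ \in y :: y :: s]inE.
move=> /orP [/eqP ->|->] ymax; split; rewrite ?mem_head // => m ms;
  by apply: ymax; rewrite inE ms orbT.
Qed.

Lemma lexle_lmon p m : m \in msupp p -> lexle m (lmon p).
Proof.
move=> mp; have pn0 : p != 0 by apply: contraTneq mp => ->; rewrite msupp0.
by have [_] := lmon_max pn0; apply.
Qed.

Lemma lmon_eq p m : m \in msupp p -> (forall m', m' \in msupp p -> lexle m' m) ->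
  lmon p = m.
Proof.
move=> mp mmax; have pn0 : p != 0 by apply: contraTneq mp => ->; rewrite msupp0.
by have [lp _] := lmon_max pn0; apply: lexle_anti (mmax _ lp) (lexle_lmon mp).
Qed.

Lemma lmonN p : lmon (- p) = lmon p.
Proof.
have [->|pn0] := eqVneq p 0; first by rewrite oppr0.
have [lp lmax] := lmon_max pn0.
by apply: lmon_eq => [|m]; rewrite (perm_mem (msuppN p)) //; apply: lmax.
Qed.

Lemma lmon_binomial m1 m2 : m1 != m2 ->
  lmon ('X_[m1] - 'X_[m2] : {mpoly K[n]}) = if lexlt m1 m2 then m2 else m1.
Proof.
wlog lt21 : m1 m2 / lexlt m2 m1 => [hwlog|] ne.
  have /orP [lt12|lt21] := lexlt_total ne; last exact: hwlog.
  by rewrite -opprB lmonN hwlog 1?eq_sym // lt12 lexlt_asym.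
rewrite lexlt_asym //; apply: lmon_eq => [|m].
  by rewrite mcoeff_msupp mcoeffB !mcoeffX eqxx (eq_sym m2) (negbTE ne) subr0 oner_eq0.
rewrite mcoeff_msupp mcoeffB !mcoeffX.
have [<-|_] := eqVneq m1 m; first by rewrite lexle_refl.
by have [<- _|_] := eqVneq m2 m; [apply: lexltW | rewrite subrr eqxx].
Qed.

Lemma lexle_lmon_binomial m1 m2 L : m1 != m2 -> lexle m1 L -> lexle m2 L ->
  lexle (lmon ('X_[m1] - 'X_[m2] : {mpoly K[n]})) L.
Proof. by move=> ne le1 le2; rewrite lmon_binomial //; case: ifP. Qed.

(* Since [m2 < m1], the coefficient of [lmon u + m1] in [u * (X^m1 - X^m2)]
   cannot be cancelled by a term of [u * X^m2]. *)
Lemma lexle_msupp_mul_binomial u m1 m2 mu L :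
  lexlt m2 m1 -> mu \in msupp u ->
  lexle (lmon (u * ('X_[m1] - 'X_[m2]))) L -> lexle (mu + m1)%MM L.
Proof.
move=> lt21 mus hL.
have un0 : u != 0 by apply: contraTneq mus => ->; rewrite msupp0.
have [lu umax] := lmon_max un0.
have coef2 : (u * 'X_[m2])@_(lmon u + m1)%MM = 0.
  apply/eqP; apply: contraT; rewrite -mcoeff_msupp (perm_mem (msuppMX u m2)).
  case/mapP => nu nus /esym e.
  have := umax _ nus; rewrite -(lexle_addr _ _ m2) [(nu + _)%MM]addmC e lexleNgt.
  by rewrite lexlt_addl lt21.
have coef1 : (lmon u + m1)%MM \in msupp (u * ('X_[m1] - 'X_[m2])).
  by rewrite mcoeff_msupp mulrBr mcoeffB coef2 subr0 addmC mcoeffMX -mcoeff_msupp.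
apply: lexle_trans (lexle_trans (lexle_lmon coef1) hL).
by rewrite lexle_addr umax.
Qed.

Lemma mul_binomial_support u m1 m2 M L : m1 != m2 ->
  (u * ('X_[m1] - 'X_[m2]))@_M != 0 ->
  lexle (lmon (u * ('X_[m1] - 'X_[m2]))) L ->
  exists mu, [/\ (mu + m1)%MM = M \/ (mu + m2)%MM = M,
                 lexle (mu + m1)%MM L & lexle (mu + m2)%MM L].
Proof.
move=> ne hM hL.
have [mu mus hmu] : exists2 mu, mu \in msupp u & (mu + m1)%MM = M \/ (mu + m2)%MM = M.
  move: hM; rewrite mulrBr mcoeffB.
  have [|] := boolP (M \in msupp (u * 'X_[m1])); rewrite (perm_mem (msuppMX _ _)).
    by move=> /mapP [mu mus ->] _; exists mu => //; left; rewrite addmC.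
  rewrite -(perm_mem (msuppMX _ _)) mcoeff_msupp negbK => /eqP ->.
  rewrite sub0r oppr_eq0 -mcoeff_msupp (perm_mem (msuppMX _ _)).
  by move=> /mapP [mu mus ->]; exists mu => //; right; rewrite addmC.
exists mu; have /orP [lt12|lt21] := lexlt_total ne.
  have hL' : lexle (lmon (u * ('X_[m2] - 'X_[m1]))) L by rewrite -opprB mulrN lmonN.
  have le2 := lexle_msupp_mul_binomial lt12 mus hL'.
  split=> //; apply: lexle_trans _ le2.
  by rewrite ![(mu + _)%MM]addmC lexle_addr lexltW.
have le1 := lexle_msupp_mul_binomial lt21 mus hL.
split=> //; apply: lexle_trans _ le1.
by rewrite ![(mu + _)%MM]addmC lexle_addr lexltW.
Qed.

End LeadingMonomial.

Section VertexVariables.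
Variable ord : seq pt.
Implicit Types (t : 'I_(size ord)) (u v w z x y : pt).

Lemma mvarE v t : mvar ord v t = (index v ord == t).
Proof.
rewrite /mvar; case: insubP => [s _ <-|]; first by rewrite mnm1E val_eqE.
rewrite mnm0E -leqNgt => /(leq_trans (ltn_ord t)); case: eqP => // ->.
by rewrite ltnn.
Qed.

Lemma index_eq u v : u \in ord -> (index v ord == index u ord) = (v == u).
Proof.
move=> uin; apply/eqP/eqP => [e|-> //].
have vin : v \in ord by rewrite -index_mem e index_mem.
by rewrite -(nth_index u vin) e nth_index.
Qed.

Lemma mvar_coord u v t : u \in ord -> nat_of_ord t = index u ord ->
  mvar ord v t = (v == u).
Proof. by move=> uin tu; rewrite mvarE tu index_eq. Qed.

Lemma mvar_mnm1 u : u \in ord ->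
  exists2 t : 'I_(size ord), nat_of_ord t = index u ord & mvar ord u = U_(t)%MM.
Proof.
move=> uin; have lt : (index u ord < size ord)%N by rewrite index_mem.
by exists (Ordinal lt) => //; rewrite /mvar insubT.
Qed.

Lemma xvM (K : fieldType) u v : xv K ord u * xv K ord v = 'X_[mvar ord u + mvar ord v].
Proof. by rewrite mpolyXD. Qed.

Lemma fabE (K : fieldType) x y :
  fab K ord x y =
  'X_[mvar ord x + mvar ord y] - 'X_[mvar ord (x.1, y.2) + mvar ord (y.1, x.2)].
Proof. by rewrite /fab !xvM. Qed.

Lemma mcoprime_mvar u v : u \in ord -> u != v -> mcoprime (mvar ord u) (mvar ord v).
Proof.
move=> uin uv; apply/forallP => t; rewrite !mvarE.
case: (eqVneq (index u ord) t) => [eu|] //; case: (eqVneq (index v ord) t) => [ev|] //.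
by move: uv; rewrite eq_sym -(index_eq _ uin) eu ev eqxx.
Qed.

Lemma mcoprime_mvar2 u v w z : u \in ord -> v \in ord ->
  u != w -> u != z -> v != w -> v != z ->
  mcoprime (mvar ord u + mvar ord v)%MM (mvar ord w + mvar ord z)%MM.
Proof.
move=> uin vin *.
have cop x y : x \in ord -> x != y -> mcoprime (mvar ord y) (mvar ord x).
  by move=> xin xy; rewrite mcoprimeC mcoprime_mvar.
by rewrite mcoprimeDl !(mcoprimeC (mvar ord _)) !mcoprimeDl !cop.
Qed.

Lemma lexlt_mvar2 u v w z : u \in ord -> v \in ord -> w \in ord -> z \in ord ->
  u != w -> u != z -> v != w -> v != z ->
  lexlt (mvar ord u + mvar ord v)%MM (mvar ord w + mvar ord z)%MM =
  (Plt ord u w && Plt ord v w) || (Plt ord u z && Plt ord v z).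
Proof.
move=> uin vin win zin uw uz vw vz.
have [tu eu ->] := mvar_mnm1 uin; have [tv ev ->] := mvar_mnm1 vin.
have [tw ew ->] := mvar_mnm1 win; have [tz ez ->] := mvar_mnm1 zin.
have neq x y s t : x \in ord -> nat_of_ord s = index x ord -> nat_of_ord t = index y ord ->
   x != y -> s != t.
  by move=> xin es et; apply: contra => /eqP st; rewrite eq_sym -(index_eq _ xin) -es -et st.
rewrite lexlt_mnm1D ?(neq u w tu tw) ?(neq u z tu tz) ?(neq v w tv tw) ?(neq v z tv tz) //.
by rewrite /Plt -eu -ev -ew -ez; apply/idP/idP; lia.
Qed.

Lemma mon3_rot x y z : mon3 ord x y z = mon3 ord y z x.
Proof. by apply/mnmP => s; rewrite !mnmDE; lia. Qed.

Lemma mon3_swap x y z : mon3 ord x y z = mon3 ord x z y.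
Proof. by apply/mnmP => s; rewrite !mnmDE; lia. Qed.

Lemma lexlt_mon3 u v w z x : u \in ord -> v \in ord -> w \in ord -> z \in ord ->
  u != w -> u != z -> v != w -> v != z ->
  lexlt (mon3 ord u v x) (mon3 ord w z x) =
  (Plt ord u w && Plt ord v w) || (Plt ord u z && Plt ord v z).
Proof. by move=> *; rewrite /mon3 lexlt_addr lexlt_mvar2. Qed.

Lemma mvar2_neq u v w z : u \in ord -> u \notin [:: w; z] ->
  (mvar ord u + mvar ord v)%MM != (mvar ord w + mvar ord z)%MM.
Proof.
move=> uin; have [t et _] := mvar_mnm1 uin; rewrite !inE.
apply: contra => /eqP /(congr1 (fun m : 'X_{1..size ord} => m t)).
by rewrite !mnmDE !(mvar_coord _ uin et) !(eq_sym u) eqxx; case: (w == u); case: (z == u).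
Qed.

Lemma mon3_neq u x1 x2 x3 y1 y2 y3 : u \in ord ->
  u \in [:: x1; x2; x3] -> u \notin [:: y1; y2; y3] ->
  mon3 ord x1 x2 x3 != mon3 ord y1 y2 y3.
Proof.
move=> uin; have [t et _] := mvar_mnm1 uin; rewrite !inE => hx.
apply: contra => /eqP /(congr1 (fun m : 'X_{1..size ord} => m t)).
rewrite !mnmDE !(mvar_coord _ uin et) !(eq_sym _ u).
by move: hx; case: (u == x1); case: (u == x2); case: (u == x3);
   case: (u == y1); case: (u == y2); case: (u == y3).
Qed.

Lemma mvar_le_mon3 u x y z : u \in ord -> (mvar ord u <= mon3 ord x y z)%MM ->
  u \in [:: x; y; z].
Proof.
move=> uin; have [t et _] := mvar_mnm1 uin; move=> /mnm_lepP /(_ t).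
rewrite !mnmDE !(mvar_coord _ uin et) eqxx !inE !(eq_sym _ u).
by case: (u == x); case: (u == y); case: (u == z).
Qed.

End VertexVariables.

Section InnerIntervals.
Variable P : seq pt.

Lemma cell_vertex_mem e v : e \in P -> v \in cell_vertices e -> v \in vertices P.
Proof. by move=> eP ve; rewrite mem_undup; apply/flatten_mapP; exists e. Qed.

Lemma inner_corners x y : inner_interval P x y ->
  [/\ x \in vertices P, y \in vertices P, (x.1, y.2) \in vertices P &
      (y.1, x.2) \in vertices P].
Proof.
case: x y => [x1 x2] [y1 y2] [/= lt1 [lt2 cells]].
have corner e v : e \in P -> v \in cell_vertices e -> v \in vertices P := @cell_vertex_mem e v.
split.
- by apply: (corner (x1, x2)); [apply: cells => /=; lia | rewrite mem_head].
- apply: (corner (y1 - 1, y2 - 1)); first by apply: cells => /=; lia.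
  by rewrite !inE /= !subrK eqxx !orbT.
- apply: (corner (x1, y2 - 1)); first by apply: cells => /=; lia.
  by rewrite !inE /= !subrK eqxx !orbT.
- apply: (corner (y1 - 1, x2)); first by apply: cells => /=; lia.
  by rewrite !inE /= !subrK eqxx !orbT.
Qed.

Lemma inner_corner_notin (x y : pt) : inner_interval P x y ->
  x \notin [:: (x.1, y.2); (y.1, x.2)].
Proof. by case: x y => [x1 x2] [y1 y2] [/= lt1 [lt2 _]]; rewrite !inE !xpair_eqE; lia. Qed.

Lemma inner_sub (x y x' y' : pt) : inner_interval P x y ->
  x.1 <= x'.1 -> x'.1 < y'.1 -> y'.1 <= y.1 ->
  x.2 <= x'.2 -> x'.2 < y'.2 -> y'.2 <= y.2 -> inner_interval P x' y'.
Proof. by move=> [_ [_ cells]] *; do 2 split=> //; move=> v *; apply: cells; lia. Qed.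

Lemma inner_stack_vertical (i k j l q : int) :
  inner_interval P (i, j) (k, l) -> inner_interval P (i, l) (k, q) ->
  inner_interval P (i, j) (k, q).
Proof.
rewrite /inner_interval /= => -[ik [jl low]] [_ [lq up]]; split=> //; split; first by lia.
by move=> v *; case: (leP (v.2 + 1) l) => hv; [apply: low | apply: up] => /=; lia.
Qed.

Lemma inner_stack_horizontal (i k p j l : int) :
  inner_interval P (i, j) (k, l) -> inner_interval P (k, j) (p, l) ->
  inner_interval P (i, j) (p, l).
Proof.
rewrite /inner_interval /= => -[ik [jl left]] [kp [_ right]]; split; first by lia.
split=> //.
by move=> v *; case: (leP (v.1 + 1) k) => hv; [apply: left | apply: right] => /=; lia.
Qed.

End InnerIntervals.

Section StandardExpressions.
Variables (K : fieldType) (P ord : seq pt).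
Implicit Types (f u g : {mpoly K[size ord]}) (m : 'X_{1..size ord}).

Lemma reduces_to_zero_chain m1 m2 m3 u1 g1 u2 g2 :
  inG P g1 -> inG P g2 ->
  u1 * g1 = 'X_[m1] - 'X_[m2] -> u2 * g2 = 'X_[m2] - 'X_[m3] ->
  m1 != m3 -> lexlt m2 (lmon ('X_[m1] - 'X_[m3] : {mpoly K[size ord]})) ->
  reduces_to_zero P ('X_[m1] - 'X_[m3] : {mpoly K[size ord]}).
Proof.
move=> G1 G2 e1 e2 ne13 lt2; set L := lmon _ in lt2.
have le1 : lexle m1 L.
  apply: lexle_lmon; rewrite mcoeff_msupp mcoeffB !mcoeffX eqxx (eq_sym m3).
  by rewrite (negbTE ne13) subr0 oner_eq0.
have le3 : lexle m3 L.
  apply: lexle_lmon; rewrite mcoeff_msupp mcoeffB !mcoeffX eqxx (negbTE ne13).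
  by rewrite sub0r oppr_eq0 oner_eq0.
exists [:: (u1, g1); (u2, g2)]; split.
- by move=> ug; rewrite !inE => /orP [] /eqP ->.
- by rewrite !big_cons big_nil addr0 e1 e2 addrA subrK.
move=> ug; rewrite !inE => /orP [] /eqP -> /=; rewrite ?e1 ?e2 => nz;
  (apply: lexle_lmon_binomial => //; last exact: lexltW);
  by apply: contraNneq nz => ->; rewrite subrr.
Qed.

Hypothesis vertices_ord : {subset vertices P <= ord}.

Lemma reduces_to_zero_support f M : reduces_to_zero P f -> f@_M != 0 ->
  exists x y mu, [/\ inner_interval P x y,
    (mu + (mvar ord x + mvar ord y))%MM = M \/
    (mu + (mvar ord (x.1, y.2) + mvar ord (y.1, x.2)))%MM = M,
    lexle (mu + (mvar ord x + mvar ord y))%MM (lmon f) &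
    lexle (mu + (mvar ord (x.1, y.2) + mvar ord (y.1, x.2)))%MM (lmon f)].
Proof.
move=> [s [sG sE sL]] fM.
have [ug ugs nz] : exists2 ug, ug \in s & (ug.1 * ug.2)@_M != 0.
  apply/hasP; apply: contraNT fM => /hasPn hn.
  by rewrite sE raddf_sum big_seq big1 // => ug /hn /negPn /eqP.
have nz' : ug.1 * ug.2 != 0 by apply: contraNneq nz => ->; rewrite mcoeff0.
have le := sL ug ugs nz'.
have [x [y [Ixy eg]]] := sG ug ugs.
rewrite eg fabE in nz le.
have [xin _ _ _] := inner_corners Ixy.
have ne : (mvar ord x + mvar ord y)%MM != (mvar ord (x.1, y.2) + mvar ord (y.1, x.2))%MM.
  by apply: mvar2_neq; [exact: vertices_ord | exact: inner_corner_notin Ixy].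
have [mu [hM le1 le2]] := mul_binomial_support ne nz le.
by exists x, y, mu.
Qed.

End StandardExpressions.

Lemma grid_diagonal (i j k l p q : int) (x y : pt) :
  i < k -> j < l -> k < p -> l < q -> x.1 < y.1 -> x.2 < y.2 ->
  x \in [:: (p, q); (i, j); (k, l)] -> y \in [:: (p, q); (i, j); (k, l)] ->
  [\/ x = (i, j) /\ y = (k, l), x = (i, j) /\ y = (p, q) | x = (k, l) /\ y = (p, q)].
Proof.
case: x y => [x1 x2] [y1 y2] ik jl kp lq /= lt1 lt2.
rewrite !inE => /or3P [] /eqP [? ?] /or3P [] /eqP [? ?]; subst;
  first [lia | by constructor 1 | by constructor 2 | by constructor 3].
Qed.

Lemma grid_antidiagonal (i j k l p q : int) (x y : pt) :
  i < k -> j < l -> k < p -> l < q -> x.1 < y.1 -> x.2 < y.2 ->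
  (x.1, y.2) \in [:: (p, q); (i, j); (k, l)] ->
  (y.1, x.2) \in [:: (p, q); (i, j); (k, l)] -> False.
Proof.
case: x y => [x1 x2] [y1 y2] ik jl kp lq /= lt1 lt2.
by rewrite !inE => /or3P [] /eqP [? ?] /or3P [] /eqP [? ?]; lia.
Qed.

Section TwoInnerIntervals.
Variables (K : fieldType) (P ord : seq pt) (i j k l p q : int).
Hypothesis ord_vertices : ord =i vertices P.
Hypotheses (ik : i < k) (jl : j < l) (kp : k < p) (lq : l < q).
Hypotheses (Iab : inner_interval P (i, j) (k, l)) (Icb : inner_interval P (i, l) (p, q)).

Local Notation a := (i, j).
Local Notation b := (k, l).
Local Notation c := (i, l).
Local Notation d := (k, j).
Local Notation beta := (p, q).
Local Notation gamma := (i, q).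
Local Notation delta := (p, l).
Local Notation h := (k, q).
Local Notation r := (p, j).

Local Notation Mab := (mon3 ord beta a b).
Local Notation Mdg := (mon3 ord d delta gamma).
(* The middle monomials of the standard expressions of [S] through [h] and [r]. *)
Local Notation Mh := (mon3 ord a h delta).
Local Notation Mr := (mon3 ord b gamma r).
Local Notation S := ('X_[Mdg] - 'X_[Mab] : {mpoly K[size ord]}).

Local Ltac grid := rewrite ?inE ?xpair_eqE /=; clear -ik jl kp lq; lia.

Let vertices_ord : {subset vertices P <= ord}.
Proof. by move=> v; rewrite ord_vertices. Qed.

Let Ibbeta : inner_interval P b beta.
Proof. by apply: (inner_sub Icb); rewrite /= ?lexx //; grid. Qed.

Let Iah : inner_interval P a h.
Proof.
apply: inner_stack_vertical Iab _.
by apply: (inner_sub Icb); rewrite /= ?lexx //; grid.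
Qed.

Let a_in : a \in ord. Proof. by have [/vertices_ord] := inner_corners Iab. Qed.
Let b_in : b \in ord. Proof. by have [_ /vertices_ord] := inner_corners Iab. Qed.
Let c_in : c \in ord. Proof. by have [_ _ /vertices_ord] := inner_corners Iab. Qed.
Let d_in : d \in ord. Proof. by have [_ _ _ /vertices_ord] := inner_corners Iab. Qed.
Let beta_in : beta \in ord. Proof. by have [_ /vertices_ord] := inner_corners Icb. Qed.
Let gamma_in : gamma \in ord. Proof. by have [_ _ /vertices_ord] := inner_corners Icb. Qed.
Let delta_in : delta \in ord. Proof. by have [_ _ _ /vertices_ord] := inner_corners Icb. Qed.
Let h_in : h \in ord. Proof. by have [_ /vertices_ord] := inner_corners Iah. Qed.

Lemma inner_a_beta : inner_interval P d delta -> inner_interval P a beta.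
Proof.
move=> Idd; apply: inner_stack_vertical (inner_stack_horizontal Iab Idd) _.
by apply: (inner_sub Icb); rewrite /= ?lexx //; grid.
Qed.

Let r_in : inner_interval P d delta -> r \in ord.
Proof. by move=> /inner_a_beta /inner_corners [_ _ _ /vertices_ord]. Qed.

Lemma leading_monomials :
  ~~ mcoprime (lmon (fab K ord a b)) (lmon (fab K ord c beta)) ->
  lexlt (mvar ord a + mvar ord b)%MM (mvar ord c + mvar ord d)%MM /\
  lexlt (mvar ord gamma + mvar ord delta)%MM (mvar ord c + mvar ord beta)%MM.
Proof.
have ne_f : (mvar ord a + mvar ord b)%MM != (mvar ord c + mvar ord d)%MM.
  by apply: mvar2_neq => //; grid.
have ne_g : (mvar ord c + mvar ord beta)%MM != (mvar ord gamma + mvar ord delta)%MM.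
  by apply: mvar2_neq => //; grid.
rewrite !fabE /= !lmon_binomial //.
have cop u v w z : u \in ord -> v \in ord -> u \notin [:: w; z] -> v \notin [:: w; z] ->
    mcoprime (mvar ord u + mvar ord v)%MM (mvar ord w + mvar ord z)%MM.
  by move=> uin vin; rewrite !inE !negb_or => /andP [] ? ? /andP [] ? ?; apply: mcoprime_mvar2.
case lt_f : (lexlt _ (mvar ord c + mvar ord d));
  case lt_g : (lexlt (mvar ord c + mvar ord beta) _) => /negP;
  try by case; apply: cop => //; grid.
by move=> _; split=> //; have /orP [] := lexlt_total ne_g; rewrite ?lt_g.
Qed.

Lemma spoly_grid :
  lexlt (mvar ord a + mvar ord b)%MM (mvar ord c + mvar ord d)%MM ->
  lexlt (mvar ord gamma + mvar ord delta)%MM (mvar ord c + mvar ord beta)%MM ->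
  spoly (fab K ord a b) (fab K ord c beta) = S.
Proof.
move=> lt_f lt_g.
have ne_f : (mvar ord a + mvar ord b)%MM != (mvar ord c + mvar ord d)%MM.
  by apply: mvar2_neq => //; grid.
have ne_g : (mvar ord c + mvar ord beta)%MM != (mvar ord gamma + mvar ord delta)%MM.
  by apply: mvar2_neq => //; grid.
have lcm : mlcm (mvar ord c + mvar ord d)%MM (mvar ord c + mvar ord beta)%MM =
           (mvar ord c + mvar ord d + mvar ord beta)%MM.
  by rewrite mlcmDl mlcm_coprime ?addmA // mcoprime_mvar //; grid.
rewrite /spoly /lcoef !fabE /= !lmon_binomial // lt_f lexlt_asym // lcm addKm.
rewrite addmAC addKm !mcoeffB !mcoeffX !eqxx (negbTE ne_f).
rewrite (eq_sym (mvar ord gamma + _)%MM) (negbTE ne_g) sub0r subr0 invrN1 invr1.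
by rewrite scaleN1r scale1r /mon3 !mpolyXD; ring.
Qed.

Lemma Mdg_neq_Mab : Mdg != Mab.
Proof. by apply: (@mon3_neq _ d) => //; grid. Qed.

Lemma reduces_via_h : lexlt Mh (lmon S) -> reduces_to_zero P S.
Proof.
apply: (@reduces_to_zero_chain _ _ _ _ _ _ (- xv K ord delta) (fab K ord a h)
           (- xv K ord a) (fab K ord b beta)); last exact: Mdg_neq_Mab.
- by exists a, h.
- by exists b, beta.
- by rewrite /fab /xv /mon3 /= !mpolyXD; ring.
- by rewrite /fab /xv /mon3 /= !mpolyXD; ring.
Qed.

Lemma reduces_via_r : inner_interval P d delta -> lexlt Mr (lmon S) -> reduces_to_zero P S.
Proof.
move=> Idd; apply: (@reduces_to_zero_chain _ _ _ _ _ _ (xv K ord gamma) (fab K ord d delta)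
           (- xv K ord b) (fab K ord a beta)); last exact: Mdg_neq_Mab.
- by exists d, delta.
- by exists a, beta; split=> //; apply: inner_a_beta.
- by rewrite /fab /xv /mon3 /= !mpolyXD; ring.
- by rewrite /fab /xv /mon3 /= !mpolyXD; ring.
Qed.

Lemma Mab_minor_divisor x y mu : inner_interval P x y ->
  (mu + (mvar ord x + mvar ord y))%MM = Mab ->
  [\/ [/\ x = a, y = b & mu = mvar ord beta], [/\ x = a, y = beta & mu = mvar ord b] |
      [/\ x = b, y = beta & mu = mvar ord a]].
Proof.
move=> Ixy e; have [xy1 [xy2 _]] := Ixy.
have [/vertices_ord xin /vertices_ord yin _ _] := inner_corners Ixy.
have [le_x le_y] := lem_addDl mu (mvar ord x) (mvar ord y); rewrite e in le_x le_y.
have cancel u v w : (mu + (mvar ord u + mvar ord v))%MM = mon3 ord w u v -> mu = mvar ord w.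
  by rewrite /mon3 -addmA; apply: addIm.
have := grid_diagonal ik jl kp lq xy1 xy2 (mvar_le_mon3 xin le_x) (mvar_le_mon3 yin le_y).
move: e => /[swap] -[].
- by move=> [-> ->] /cancel ->; constructor 1.
- by move=> [-> ->]; rewrite mon3_swap mon3_rot => /cancel ->; constructor 2.
- by move=> [-> ->]; rewrite mon3_rot => /cancel ->; constructor 3.
Qed.

Lemma Mab_antidiagonal x y mu : inner_interval P x y ->
  (mu + (mvar ord (x.1, y.2) + mvar ord (y.1, x.2)))%MM != Mab.
Proof.
move=> Ixy; have [xy1 [xy2 _]] := Ixy; apply/eqP => e.
have [_ _ /vertices_ord cin /vertices_ord din] := inner_corners Ixy.
have [le_c le_d] := lem_addDl mu (mvar ord (x.1, y.2)) (mvar ord (y.1, x.2)).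
rewrite e in le_c le_d.
exact: grid_antidiagonal ik jl kp lq xy1 xy2 (mvar_le_mon3 cin le_c) (mvar_le_mon3 din le_d).
Qed.

Lemma lmonS : lmon S = if lexlt Mdg Mab then Mab else Mdg.
Proof. exact/lmon_binomial/Mdg_neq_Mab. Qed.

Lemma lexlt_lmonS_beta_c_d :
  lexlt (mvar ord a + mvar ord b)%MM (mvar ord c + mvar ord d)%MM ->
  lexlt (mvar ord gamma + mvar ord delta)%MM (mvar ord c + mvar ord beta)%MM ->
  lexlt (lmon S) (mvar ord beta + (mvar ord c + mvar ord d))%MM.
Proof.
move=> lt_f lt_g; rewrite lmonS; case: ifP => _; first by rewrite /mon3 -addmA lexlt_addl.
have -> : (mvar ord beta + (mvar ord c + mvar ord d))%MM =
          (mvar ord c + mvar ord beta + mvar ord d)%MM.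
  by rewrite addmA [(mvar ord beta + _)%MM]addmC.
have -> : Mdg = (mvar ord gamma + mvar ord delta + mvar ord d)%MM.
  by rewrite /mon3 -addmA [(mvar ord delta + _)%MM]addmC addmC.
by rewrite lexlt_addr.
Qed.

Lemma reduces_to_zero_cases :
  lexlt (mvar ord a + mvar ord b)%MM (mvar ord c + mvar ord d)%MM ->
  lexlt (mvar ord gamma + mvar ord delta)%MM (mvar ord c + mvar ord beta)%MM ->
  reduces_to_zero P S ->
  lexlt Mh (lmon S) \/ (inner_interval P d delta /\ lexlt Mr (lmon S)).
Proof.
move=> lt_f lt_g red.
have coef : S@_Mab != 0.
  by rewrite mcoeffB !mcoeffX eqxx (negbTE Mdg_neq_Mab) sub0r oppr_eq0 oner_eq0.
have neq_lmonS u x1 x2 x3 : u \in ord -> u \in [:: x1; x2; x3] ->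
    u \notin [:: beta; a; b] -> u \notin [:: d; delta; gamma] -> mon3 ord x1 x2 x3 != lmon S.
  by move=> uin ux nab ndg; rewrite lmonS; case: ifP => _; apply: (mon3_neq uin).
have [x [y [mu [Ixy [eM|eM] _ le]]]] := reduces_to_zero_support vertices_ord red coef;
  last by have := Mab_antidiagonal mu Ixy; rewrite eM eqxx.
case: (Mab_minor_divisor Ixy eM) => -[ex ey emu]; rewrite ex ey emu /= in le Ixy.
- by have := lexle_lt_trans le (lexlt_lmonS_beta_c_d lt_f lt_g); rewrite lexlt_irr.
- rewrite addmA in le.
  have Idd : inner_interval P d delta by apply: (inner_sub Ixy); rewrite /= ?lexx //; grid.
  right; split=> //; apply: lexle_neq_lt le _.
  by apply: (@neq_lmonS r); [exact: r_in | grid..].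
- rewrite addmA in le; left; apply: lexle_neq_lt le _.
  by apply: (@neq_lmonS h) => //; grid.
Qed.

Lemma lexlt_Mh_Mab :
  lexlt Mh Mab = (Plt ord h b && Plt ord delta b) || (Plt ord h beta && Plt ord delta beta).
Proof. by rewrite (mon3_rot _ a h) (mon3_rot _ beta) (mon3_rot _ a b) lexlt_mon3 //; grid. Qed.

Lemma lexlt_Mh_Mdg :
  lexlt Mh Mdg = (Plt ord h d && Plt ord a d) || (Plt ord h gamma && Plt ord a gamma).
Proof. by rewrite (mon3_rot _ a) (mon3_swap _ h) (mon3_swap _ d) lexlt_mon3 //; grid. Qed.

Lemma lexlt_Mr_Mab : inner_interval P d delta ->
  lexlt Mr Mab = (Plt ord r a && Plt ord gamma a) || (Plt ord r beta && Plt ord gamma beta).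
Proof.
move=> /r_in r_ord.
rewrite (mon3_swap _ b) (mon3_rot _ b) (mon3_rot _ beta) (mon3_swap _ a).
by rewrite lexlt_mon3 //; grid.
Qed.

Lemma lexlt_Mr_Mdg : inner_interval P d delta ->
  lexlt Mr Mdg = (Plt ord r d && Plt ord b d) || (Plt ord r delta && Plt ord b delta).
Proof. by move=> /r_in r_ord; rewrite (mon3_rot _ b) (mon3_rot _ gamma) lexlt_mon3 //; grid. Qed.

Lemma reduces_spoly_iff :
  lexlt (mvar ord a + mvar ord b)%MM (mvar ord c + mvar ord d)%MM ->
  lexlt (mvar ord gamma + mvar ord delta)%MM (mvar ord c + mvar ord beta)%MM ->
  reduces_to_zero P (spoly (fab K ord a b) (fab K ord c beta)) <->
  [\/ lexlt Mdg Mab /\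
        ((Plt ord h b && Plt ord delta b) || (Plt ord h beta && Plt ord delta beta)),
      [/\ lexlt Mdg Mab, inner_interval P d delta &
          (Plt ord r a && Plt ord gamma a) || (Plt ord r beta && Plt ord gamma beta)],
      lexlt Mab Mdg /\
        ((Plt ord h d && Plt ord a d) || (Plt ord h gamma && Plt ord a gamma)) |
      [/\ lexlt Mab Mdg, inner_interval P d delta &
          (Plt ord r d && Plt ord b d) || (Plt ord r delta && Plt ord b delta)]].
Proof.
move=> lt_f lt_g; rewrite spoly_grid // -lexlt_Mh_Mab -lexlt_Mh_Mdg.
have -> : reduces_to_zero P S <->
          lexlt Mh (lmon S) \/ (inner_interval P d delta /\ lexlt Mr (lmon S)).
  split; first exact: reduces_to_zero_cases.
  by case=> [/reduces_via_h | [Idd /(reduces_via_r Idd)]].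
rewrite lmonS; have /orP [lt|lt] := lexlt_total Mdg_neq_Mab; rewrite lt (lexlt_asym lt).
- split=> [[hM|[dd hR]]|[[_ hM]|[_ dd hR]|[]|[]]] //.
  + by constructor 1.
  + by constructor 2; rewrite -?(lexlt_Mr_Mab dd).
  + by left.
  + by right; rewrite (lexlt_Mr_Mab dd).
- split=> [[hM|[dd hR]]|[[]|[]|[_ hM]|[_ dd hR]]] //.
  + by constructor 3.
  + by constructor 4; rewrite -?(lexlt_Mr_Mdg dd).
  + by left.
  + by right; rewrite (lexlt_Mr_Mdg dd).
Qed.

End TwoInnerIntervals.

Theorem mainTheorem4 (K : fieldType) (P ord : seq pt) (i j k l p q : int) :
  P != [::] ->
  is_Porder P ord ->
  i < k -> j < l -> k < p -> l < q ->
  inner_interval P (i, j) (k, l) ->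
  inner_interval P (i, l) (p, q) ->
  ~~ mcoprime (lmon (fab K ord (i, j) (k, l))) (lmon (fab K ord (i, l) (p, q))) ->
  let a := (i, j) in let b := (k, l) in
  let alpha := (i, l) in let beta := (p, q) in
  let c := (i, l) in let d := (k, j) in
  let gamma := (i, q) in let delta := (p, l) in
  let h := (k, q) in let r := (p, j) in
  (reduces_to_zero P (spoly (fab K ord a b) (fab K ord alpha beta)) <->
   [\/ lexlt (mon3 ord d delta gamma) (mon3 ord beta a b) /\
         ((Plt ord h b && Plt ord delta b) || (Plt ord h beta && Plt ord delta beta)),
       [/\ lexlt (mon3 ord d delta gamma) (mon3 ord beta a b),
           inner_interval P d delta &
           (Plt ord r a && Plt ord gamma a) || (Plt ord r beta && Plt ord gamma beta)],
       lexlt (mon3 ord beta a b) (mon3 ord d delta gamma) /\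
         ((Plt ord h d && Plt ord a d) || (Plt ord h gamma && Plt ord a gamma)) |
       [/\ lexlt (mon3 ord beta a b) (mon3 ord d delta gamma),
           inner_interval P d delta &
           (Plt ord r d && Plt ord b d) || (Plt ord r delta && Plt ord b delta)]]).
Proof.
move=> _ [_ ord_vert] ik jl kp lq Iab Icb ncop.
have [lt_f lt_g] := leading_monomials ord_vert ik jl kp lq Iab ncop.
exact: reduces_spoly_iff ord_vert ik jl kp lq Iab Icb lt_f lt_g.
Qed.
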